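(* Suppose Assumptions 1, 2, 3 and 5 hold (but not necessarily Assumption 4), with all expectations finite. For $(g,t)\in\{0,1\}^2$ let $p_{1|gt}=P(D_{gt}=1)$ and $\Delta_{gt}=E\big(Y(1)-Y(0)\mid G=g,T=t,D(0)=1\big)$ (a term multiplied by $p_{1|10}=0$ is taken to be $0$). Then $$W_{DID}=\Delta+\frac{1}{DID_D}\Big((\Delta_{11}-\Delta_{10})\,p_{1|10}-(\Delta_{01}-\Delta_{00})\,p_{1|00}\Big).$$
   Context: Standing framework. Let $(Y(0),Y(1),V,G,T)$ be random variables on a common probability space, with $G\in\{0,1\}$ (group; $G=1$ is the ''treatment group''), $T\in\{0,1\}$ (period), $V$ real-valued, and let $(v_{gt})_{(g,t)\in\{0,1\}^2}$ be real constants. The treatment is $D=1\{V\geq v_{GT}\}$ and the potential treatments are $D(t)=1\{V\geq v_{Gt}\}$, $t\in\{0,1\}$, so that $D=D(T)$. The observed outcome is $Y=DY(1)+(1-D)Y(0)$. For any random variable $R$, $R_{gt}$ denotes a random variable distributed as $R$ conditional on $\{G=g,T=t\}$ and $R_{dgt}$ one distributed as $R$ conditional on $\{D=d,G=g,T=t\}$. Let $S=\{D(0)<D(1),\,G=1\}$ and $\Delta=E(Y(1)-Y(0)\mid S,T=1)$. Assumption 1: $D=1\{V\geq v_{GT}\}$ with $V$ independent of $T$ conditional on $G$. Assumption 2: $E(D_{11})>E(D_{10})$ and $E(D_{11})-E(D_{10})>E(D_{01})-E(D_{00})$. Assumption 3: $E(Y(0)\mid G,T=1)-E(Y(0)\mid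 G,T=0)$ does not depend on $G$. Assumption 5: $0<E(D_{01})=E(D_{00})<1$. For any random variable $R$, $DID_R=E(R_{11})-E(R_{10})-\big(E(R_{01})-E(R_{00})\big)$, and $W_{DID}=DID_Y/DID_D$. *)

(* Every genuine
   probability space (events = measurable sets, integrable = L^1, E = Lebesgue
   integral) is an instance, so the theorem below generalizes the paper's. *)
From Stdlib Require Import Reals ClassicalDescription.
Open Scope R_scope.

Definition ind {O : Type} (A : O -> Prop) (w : O) : R :=
  if excluded_middle_informative (A w) then 1 else 0.

Record ProbSpace := mkPS {
  Omega : Type;
  event : (Omega -> Prop) -> Prop;
  integrable : (Omega -> R) -> Prop;
  E : (Omega -> R) -> R;
  event_full : event (fun _ => True);
  event_compl : forall A, event A -> event (fun w => ~ A w);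
  event_cunion : forall A : nat -> Omega -> Prop,
      (forall n, event (A n)) -> event (fun w => exists n, A n w);
  integrable_ind : forall A, event A -> integrable (ind A);
  integrable_add : forall f g, integrable f -> integrable g ->
      integrable (fun w => f w + g w);
  integrable_scal : forall (c : R) f, integrable f -> integrable (fun w => c * f w);
  integrable_mul_ind : forall A f, event A -> integrable f ->
      integrable (fun w => ind A w * f w);
  E_add : forall f g, integrable f -> integrable g ->
      E (fun w => f w + g w) = E f + E g;
  E_scal : forall (c : R) f, integrable f -> E (fun w => c * f w) = c * E f;
  E_mono : forall f g, integrable f -> integrable g ->
      (forall w, f w <= g w) -> E f <= E g;
  E_one : E (fun _ => 1) = 1;
  E_null : forall N f, event N -> E (ind N) = 0 -> integrable f ->
      E (fun w => ind N w * f w) = 0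
}.

Arguments event {p} _.
Arguments integrable {p} _.
Arguments E {p} _.

Inductive Borel : (R -> Prop) -> Prop :=
  | Borel_ge : forall c, Borel (fun x => c <= x)
  | Borel_compl : forall B, Borel B -> Borel (fun x => ~ B x)
  | Borel_cunion : forall B : nat -> R -> Prop,
      (forall n, Borel (B n)) -> Borel (fun x => exists n, B n x)
  | Borel_ext : forall B B', Borel B -> (forall x, B x <-> B' x) -> Borel B'.

Section Defs.
Context {P : ProbSpace}.

Definition Pr (A : Omega P -> Prop) : R := E (ind A).

(** E(X | A) = E(X 1_A) / P(A)  (Stdlib convention / 0 = 0). *)
Definition CE (X : Omega P -> R) (A : Omega P -> Prop) : R :=
  E (fun w => ind A w * X w) / Pr A.

(** The cell {G = g, T = t}; the group/period values 0,1 are encoded as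
    false,true. *)
Definition cell (G T : Omega P -> bool) (g t : bool) : Omega P -> Prop :=
  fun w => G w = g /\ T w = t.

Definition DID (G T : Omega P -> bool) (X : Omega P -> R) : R :=
  CE X (cell G T true true) - CE X (cell G T true false)
  - (CE X (cell G T false true) - CE X (cell G T false false)).

Definition Dtreat (V : Omega P -> R) (G T : Omega P -> bool) (v : bool -> bool -> R)
  : Omega P -> R := ind (fun w => v (G w) (T w) <= V w).

Definition Dpot (V : Omega P -> R) (G : Omega P -> bool) (v : bool -> bool -> R)
  (t : bool) : Omega P -> R := ind (fun w => v (G w) t <= V w).

Definition Yobs (Y0 Y1 : Omega P -> R) (D : Omega P -> R) : Omega P -> R :=
  fun w => D w * Y1 w + (1 - D w) * Y0 w.

(** V independent of T conditional on G (for discrete G, T):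
    P(V in B, T = t | G = g) = P(V in B | G = g) P(T = t | G = g),
    written multiplicatively. *)
Definition cond_indep_V_T_given_G (V : Omega P -> R) (G T : Omega P -> bool) : Prop :=
  forall (B : R -> Prop) (g t : bool), Borel B ->
    Pr (fun w => B (V w) /\ T w = t /\ G w = g) * Pr (fun w => G w = g)
    = Pr (fun w => B (V w) /\ G w = g) * Pr (fun w => T w = t /\ G w = g).

End Defs.

(* Write q_g(c) = P(V >= c | G = g). Conditional independence of V and T
   given G makes P(D = 1 | G = g, T = t) = q_g(v_gt), and more generally the
   share of units of cell (g, t) above any threshold c is q_g(c), whatever t.
   In the control group Assumption 5 gives q_0(v_01) = q_0(v_00), so the
   treated units of both periods are, up to a null set, the units with
   D(0) = 1. In the treatment group Assumption 2 forces v_11 < v_10, so the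
   treated units of cell (1,1) split into those with D(0) = 1 and the
   compliers S, the latter of mass q_1(v_11) - q_1(v_10) = DID_D. Writing
   E(Y_gt) = E(Y(0)_gt) + E((Y(1) - Y(0)) 1{D = 1})_gt cell by cell,
   Assumption 3 cancels the Y(0) terms and what remains is the formula. *)
From Stdlib Require Import Reals Lra ClassicalDescription FunctionalExtensionality
  PropExtensionality Classical.
Open Scope R_scope.

Ltac case_ind :=
  repeat match goal with |- context [excluded_middle_informative ?A] =>
    destruct (excluded_middle_informative A) end.

Section ProbabilityFacts.
Context {P : ProbSpace}.
Implicit Types (A B : Omega P -> Prop) (X : Omega P -> R).

Lemma ind_ext A B : (forall w, A w <-> B w) -> ind A = ind B.
Proof.
  intro HAB; apply functional_extensionality; intro w; unfold ind.
  specialize (HAB w); case_ind; tauto.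
Qed.

Lemma Pr_ext A B : (forall w, A w <-> B w) -> Pr A = Pr B.
Proof. intro HAB; unfold Pr; rewrite (ind_ext A B HAB); reflexivity. Qed.

Lemma CE_ext X A B : (forall w, A w <-> B w) -> CE X A = CE X B.
Proof. intro HAB; unfold CE; rewrite (Pr_ext A B HAB), (ind_ext A B HAB); reflexivity. Qed.

Lemma E_ext X X' : (forall w, X w = X' w) -> E X = E X'.
Proof. intro H; rewrite (functional_extensionality X X' H); reflexivity. Qed.

Lemma event_ext A B : event A -> (forall w, A w <-> B w) -> event B.
Proof.
  intros HA HAB; replace B with A; [exact HA |].
  apply functional_extensionality; intro w; apply propositional_extensionality, HAB.
Qed.

Lemma event_bool (f : Omega P -> bool) b :
  event (fun w => f w = true) -> event (fun w => f w = b).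
Proof.
  intro Hf; destruct b; [exact Hf |].
  apply (event_ext _ _ (event_compl _ _ Hf)).
  intro w; destruct (f w); intuition discriminate.
Qed.

Lemma event_and A B : event A -> event B -> event (fun w => A w /\ B w).
Proof.
  intros HA HB.
  pose (C := fun n : nat => match n with O => fun w => ~ A w | _ => fun w => ~ B w end).
  assert (HC : forall n, event (C n)) by (intros [|n]; apply event_compl; assumption).
  apply (event_ext _ _ (event_compl _ _ (event_cunion _ C HC))).
  intro w; split.
  - intro Hw; apply NNPP; intro Hnot; apply Hw.
    destruct (not_and_or _ _ Hnot) as [H | H]; [exists O | exists 1%nat]; exact H.
  - intros [Ha Hb] [[|n] Hn]; auto.
Qed.

Lemma event_diff A B : event A -> event B -> event (fun w => A w /\ ~ B w).
Proof. intros HA HB; apply event_and, event_compl; assumption. Qed.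

(* On a null event [CE] is [0] by the [/ 0] convention, and so is the integral. *)
Lemma E_ind_mul A X : event A -> integrable X ->
  E (fun w => ind A w * X w) = CE X A * Pr A.
Proof.
  intros HA HX; unfold CE; destruct (Req_dec (Pr A) 0) as [H0 | H0].
  - rewrite H0, Rmult_0_r; exact (E_null _ A X HA H0 HX).
  - field; exact H0.
Qed.

Lemma Pr_le A B : event A -> event B -> (forall w, A w -> B w) -> Pr A <= Pr B.
Proof.
  intros HA HB HAB; unfold Pr; apply E_mono; try apply integrable_ind; try assumption.
  intro w; specialize (HAB w); unfold ind; case_ind; tauto || lra.
Qed.

Lemma ind_diff A B : (forall w, B w -> A w) ->
  forall w, ind A w = ind B w + ind (fun w => A w /\ ~ B w) w.
Proof. intros HBA w; specialize (HBA w); unfold ind; case_ind; tauto || lra. Qed.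

Lemma E_ind_mul_diff A B X : event A -> event B -> integrable X ->
  (forall w, B w -> A w) ->
  E (fun w => ind A w * X w)
  = E (fun w => ind B w * X w) + E (fun w => ind (fun w => A w /\ ~ B w) w * X w).
Proof.
  intros HA HB HX HBA.
  rewrite <- E_add by (apply integrable_mul_ind; try apply event_diff; assumption).
  apply E_ext; intro w; rewrite (ind_diff A B HBA w); ring.
Qed.

Lemma Pr_diff A B : event A -> event B -> (forall w, B w -> A w) ->
  Pr A = Pr B + Pr (fun w => A w /\ ~ B w).
Proof.
  intros HA HB HBA; unfold Pr.
  rewrite <- E_add by (apply integrable_ind; try apply event_diff; assumption).
  apply E_ext, ind_diff, HBA.
Qed.

Lemma E_ind_mul_eq_of_Pr_eq A B X : event A -> event B -> integrable X ->
  (forall w, B w -> A w) -> Pr A = Pr B ->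
  E (fun w => ind A w * X w) = E (fun w => ind B w * X w).
Proof.
  intros HA HB HX HBA HPr.
  assert (Hnull : Pr (fun w => A w /\ ~ B w) = 0)
    by (pose proof (Pr_diff A B HA HB HBA); lra).
  rewrite (E_ind_mul_diff A B X HA HB HX HBA), (E_null _ _ X (event_diff _ _ HA HB) Hnull HX).
  ring.
Qed.

End ProbabilityFacts.

Section DifferenceInDifferences.
Variables (P : ProbSpace) (Y0 Y1 V : Omega P -> R) (G T : Omega P -> bool)
  (v : bool -> bool -> R).
Hypotheses (HGm : event (fun w => G w = true)) (HTm : event (fun w => T w = true))
  (HVm : forall c, event (fun w => c <= V w))
  (HY0 : integrable Y0) (HY1 : integrable Y1)
  (Hcell : forall g t, 0 < Pr (cell G T g t))
  (A1 : cond_indep_V_T_given_G V G T).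

Local Notation D := (Dtreat V G T v).
Local Notation TE := (fun w => Y1 w - Y0 w).
Local Notation share g t := (CE D (cell G T g t)).
Local Notation effect_D0 g t :=
  (CE TE (fun w => cell G T g t w /\ Dpot V G v false w = 1)).
Local Notation effect_compliers :=
  (CE TE (fun w => (Dpot V G v false w < Dpot V G v true w /\ G w = true) /\ T w = true)).

Definition cell_ge (g t : bool) (c : R) : Omega P -> Prop :=
  fun w => cell G T g t w /\ c <= V w.

Definition survival (g : bool) (c : R) : R :=
  Pr (fun w => c <= V w /\ G w = g) / Pr (fun w => G w = g).

Lemma event_cell g t : event (cell G T g t).
Proof. apply event_and; apply event_bool; assumption. Qed.

Lemma event_cell_ge g t c : event (cell_ge g t c).
Proof. apply event_and; [apply event_cell | apply HVm]. Qed.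

Lemma integrable_TE : integrable TE.
Proof.
  replace TE with (fun w => Y1 w + -1 * Y0 w)
    by (apply functional_extensionality; intro w; ring).
  apply integrable_add, integrable_scal; assumption.
Qed.

(* Assumption 1 in the form used: the share of cell (g, t) above c does not depend on t. *)
Lemma Pr_cell_ge g t c : Pr (cell_ge g t c) = survival g c * Pr (cell G T g t).
Proof.
  assert (HPG : 0 < Pr (fun w => G w = g)).
  { apply Rlt_le_trans with (Pr (cell G T g t)); [apply Hcell |].
    apply Pr_le; [apply event_cell | apply event_bool, HGm | intros w [Hg _]; exact Hg]. }
  pose proof (A1 (fun x => c <= x) g t (Borel_ge c)) as Hindep; cbv beta in Hindep.
  rewrite (Pr_ext _ (cell_ge g t c)) in Hindep by (unfold cell_ge, cell; tauto).
  rewrite (Pr_ext (fun w => T w = t /\ G w = g) (cell G T g t)) in Hindep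
    by (unfold cell; tauto).
  unfold survival; apply (Rmult_eq_reg_r (Pr (fun w => G w = g))); [| lra].
  rewrite Hindep; field; lra.
Qed.

Lemma survival_antitone g c c' : c <= c' -> survival g c' <= survival g c.
Proof.
  intro Hcc'; apply (Rmult_le_reg_r (Pr (cell G T g true))); [apply Hcell |].
  rewrite <- !Pr_cell_ge.
  apply Pr_le; try apply event_cell_ge.
  intros w [Hw Hle]; split; [exact Hw | lra].
Qed.

Lemma share_survival g t : share g t = survival g (v g t).
Proof.
  unfold CE; fold (Pr (cell_ge g t (v g t))).
  replace (E _) with (Pr (cell_ge g t (v g t))).
  - rewrite Pr_cell_ge; field; pose proof (Hcell g t); lra.
  - unfold Pr; apply E_ext; intro w.
    unfold Dtreat, cell_ge, cell, ind; destruct g, t, (G w), (T w); case_ind;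
      intuition (try congruence; try lra).
Qed.

Lemma CE_Yobs_cell g t :
  CE (Yobs Y0 Y1 D) (cell G T g t)
  = CE Y0 (cell G T g t) + E (fun w => ind (cell_ge g t (v g t)) w * (Y1 w - Y0 w)) / Pr (cell G T g t).
Proof.
  unfold CE; rewrite <- Rdiv_plus_distr; f_equal.
  rewrite <- E_add by (apply integrable_mul_ind;
    first [apply event_cell | apply event_cell_ge | apply integrable_TE | assumption]).
  apply E_ext; intro w.
  unfold Yobs, Dtreat, cell_ge, cell, ind; destruct g, t, (G w), (T w); case_ind;
    intuition (try congruence; try lra).
Qed.

Lemma E_treated_D0 g t :
  E (fun w => ind (cell_ge g t (v g false)) w * (Y1 w - Y0 w))
  = effect_D0 g t * share g false * Pr (cell G T g t).
Proof.
  rewrite E_ind_mul, Pr_cell_ge, <- share_survival, Rmult_assoc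
    by (apply event_cell_ge || apply integrable_TE).
  f_equal; apply CE_ext; intro w.
  unfold cell_ge, cell, Dpot, ind; destruct g, t, (G w), (T w); case_ind;
    intuition (try congruence; try lra).
Qed.

Hypothesis A2a : share true true > share true false.
Hypothesis A5b : share false true = share false false.

Lemma treatment_threshold_lt : v true true < v true false.
Proof.
  apply Rnot_le_lt; intro Hle.
  pose proof (survival_antitone true _ _ Hle).
  rewrite !share_survival in A2a; lra.
Qed.

Lemma E_treated_11 :
  E (fun w => ind (cell_ge true true (v true true)) w * (Y1 w - Y0 w))
  = (effect_D0 true true * share true false
     + effect_compliers * (share true true - share true false)) * Pr (cell G T true true).
Proof.
  pose proof treatment_threshold_lt as Hv.
  assert (Hsub : forall w, cell_ge true true (v true false) w -> cell_ge true true (v true true) w)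
    by (intros w [Hw Hle]; split; [exact Hw | lra]).
  set (compliers := fun w =>
    cell_ge true true (v true true) w /\ ~ cell_ge true true (v true false) w).
  assert (Hcompl : effect_compliers = CE TE compliers).
  { apply CE_ext; intro w; unfold compliers, cell_ge, cell, Dpot, ind.
    destruct (G w), (T w); case_ind; intuition (try congruence; try lra). }
  assert (Pr_compliers :
    Pr compliers = (share true true - share true false) * Pr (cell G T true true)).
  { rewrite !share_survival, Rmult_minus_distr_r, <- !Pr_cell_ge,
      (Pr_diff _ _ (event_cell_ge _ _ _) (event_cell_ge _ _ _) Hsub).
    fold compliers; ring. }
  rewrite (E_ind_mul_diff _ _ _ (event_cell_ge _ _ _) (event_cell_ge _ _ _) integrable_TE Hsub).
  fold compliers.
  rewrite E_treated_D0, E_ind_mul, Hcompl, Pr_compliers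
    by first [apply integrable_TE | apply event_diff; apply event_cell_ge].
  ring.
Qed.

(* Assumption 5 makes the two treated sets of the control group differ by a null event. *)
Lemma E_treated_01 :
  E (fun w => ind (cell_ge false true (v false true)) w * (Y1 w - Y0 w))
  = E (fun w => ind (cell_ge false true (v false false)) w * (Y1 w - Y0 w)).
Proof.
  assert (HPr : Pr (cell_ge false true (v false true)) = Pr (cell_ge false true (v false false))).
  { rewrite !Pr_cell_ge, <- !share_survival, A5b; reflexivity. }
  destruct (Rle_dec (v false false) (v false true)) as [Hle | Hlt].
  - symmetry; apply E_ind_mul_eq_of_Pr_eq; auto using event_cell_ge, integrable_TE.
    intros w [Hw Hc]; split; [exact Hw | lra].
  - apply E_ind_mul_eq_of_Pr_eq; auto using event_cell_ge, integrable_TE.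
    intros w [Hw Hc]; split; [exact Hw | lra].
Qed.

Lemma DID_treatment : DID G T D = share true true - share true false.
Proof. unfold DID; rewrite A5b; ring. Qed.

Hypothesis A3 : CE Y0 (cell G T true true) - CE Y0 (cell G T true false)
  = CE Y0 (cell G T false true) - CE Y0 (cell G T false false).

Lemma DID_Yobs :
  DID G T (Yobs Y0 Y1 D)
  = effect_compliers * (share true true - share true false)
    + (effect_D0 true true - effect_D0 true false) * share true false
    - (effect_D0 false true - effect_D0 false false) * share false false.
Proof.
  unfold DID; rewrite !CE_Yobs_cell, E_treated_11, E_treated_01, !E_treated_D0.
  assert (HPr : forall g t, Pr (cell G T g t) <> 0) by (intros g t; pose proof (Hcell g t); lra).
  field_simplify; [lra | repeat split; apply HPr].
Qed.

End DifferenceInDifferences.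

Theorem mainTheorem2
  (P : ProbSpace) (Y0 Y1 V : Omega P -> R) (G T : Omega P -> bool)
  (v : bool -> bool -> R)
  (HGm : event (fun w => G w = true))
  (HTm : event (fun w => T w = true))
  (HVm : forall c, event (fun w => c <= V w))
  (HY0 : integrable Y0) (HY1 : integrable Y1)
  (Hcell : forall g t, 0 < Pr (cell G T g t))
  (A1 : cond_indep_V_T_given_G V G T)
  (A2a : CE (Dtreat V G T v) (cell G T true true) > CE (Dtreat V G T v) (cell G T true false))
  (A2b : CE (Dtreat V G T v) (cell G T true true) - CE (Dtreat V G T v) (cell G T true false)
         > CE (Dtreat V G T v) (cell G T false true) - CE (Dtreat V G T v) (cell G T false false))
  (A3 : CE Y0 (cell G T true true) - CE Y0 (cell G T true false)
        = CE Y0 (cell G T false true) - CE Y0 (cell G T false false))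
  (A5a : 0 < CE (Dtreat V G T v) (cell G T false true))
  (A5b : CE (Dtreat V G T v) (cell G T false true) = CE (Dtreat V G T v) (cell G T false false))
  (A5c : CE (Dtreat V G T v) (cell G T false true) < 1) :
  let D := Dtreat V G T v in
  let Y := Yobs Y0 Y1 D in
  let TE := fun w => Y1 w - Y0 w in
  let S := fun w => Dpot V G v false w < Dpot V G v true w /\ G w = true in
  let Delta := CE TE (fun w => S w /\ T w = true) in
  let p := fun g t => CE D (cell G T g t) in
  let Dlt := fun g t =>
    CE TE (fun w => cell G T g t w /\ Dpot V G v false w = 1) in
  DID G T Y / DID G T D
  = Delta + ((Dlt true true - Dlt true false) * p true false
             - (Dlt false true - Dlt false false) * p false false) / DID G T D.
Proof.
  cbv beta zeta.
  rewrite DID_Yobs, DID_treatment by assumption.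
  field; lra.
Qed.
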